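(* Let $\mathcal G$ be a molecular graph and let $\mathcal S$ be a subset of its molecules such that the subgraph of $\mathcal G$ induced on $\mathcal S$ is doubly connected. Let $\mathcal G/\mathcal S$ be the quotient graph obtained from $\mathcal G$ by replacing all molecules of $\mathcal S$ by a single new molecule, deleting all edges with both endpoints in $\mathcal S$, and reattaching every edge of $\mathcal G$ joining a molecule of $\mathcal S$ to a molecule outside $\mathcal S$ to this new molecule (keeping its type). Then $\mathcal G$ is doubly connected if and only if $\mathcal G/\mathcal S$ is doubly connected.
   Context: A molecular graph is a finite multigraph whose vertices are called molecules and each of whose edges joins two distinct molecules and is either a diffusive edge or a blue solid edge (parallel edges are allowed). A molecular graph is doubly connected if there exist two disjoint sets of edges, $\mathcal B_{black}$ consisting only of diffusive edges and $\mathcal B_{blue}$ consisting only of blue solid or diffusive edges, such that each of $\mathcal B_{black}$ and $\mathcal B_{blue}$ contains a spanning tree of the set of all molecules. The subgraph induced on a set $\mathcal S$ of molecules consists of the molecules in $\mathcal S$ and all edges with both endpoints in $\mathcal S$. *)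

From mathcomp Require Import all_boot.
Set Implicit Arguments. Unset Strict Implicit. Unset Printing Implicit Defensive.

(* A molecular graph: finite multigraph with molecules V and edges E; each
   edge has two (distinct) endpoints and a type: diffusive (true) or blue
   solid (false). *)
Record molgraph (V E : finType) := MolGraph {
  ends : E -> V * V;
  diffusive : E -> bool;
  ends_neq : forall e, (ends e).1 != (ends e).2
}.

Section Generic.
Variables (V E : finType) (endp : E -> V * V).

Definition adj (T : {set E}) : rel V :=
  fun u v => [exists e in T, (endp e == (u, v)) || (endp e == (v, u))].

Definition spans (W : {set V}) (T : {set E}) : Prop :=
  forall u v, u \in W -> v \in W -> connect (adj T) u v.

(* T is a spanning tree of W: a nonempty vertex set W, spanned by T, and T is
   minimal with this property (tree = minimally connected graph). *)
Definition spanning_tree (W : {set V}) (T : {set E}) : Prop :=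
  W != set0 /\ spans W T /\ forall e, e \in T -> ~ spans W (T :\ e).

Definition doubly_connected_on (diff : E -> bool) (W : {set V}) (F : {set E}) : Prop :=
  exists Bblack Bblue : {set E},
    [/\ Bblack \subset F, Bblue \subset F, [disjoint Bblack & Bblue]
         & (forall e, e \in Bblack -> diff e)] /\
    (
        (exists2 T : {set E}, T \subset Bblack & spanning_tree W T) /\
        (exists2 T : {set E}, T \subset Bblue & spanning_tree W T)).
End Generic.

Section Mol.
Variables (V E : finType) (G : molgraph V E).

Definition doubly_connected : Prop :=
  doubly_connected_on (ends G) (diffusive G) [set: V] [set: E].

Definition inner_edges (S : {set V}) : {set E} :=
  [set e | ((ends G e).1 \in S) && ((ends G e).2 \in S)].

Definition induced_doubly_connected (S : {set V}) : Prop :=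
  doubly_connected_on (ends G) (diffusive G) S (inner_edges S).

(* Quotient G/S: molecules are [None] (the new molecule) and [Some x] for
   x outside S; edges are the edges of G not inside S, with endpoints in S
   redirected to [None]; edge types are kept. *)
Definition qmap (S : {set V}) (x : V) : option V :=
  if x \in S then None else Some x.

Definition quot_vertices (S : {set V}) : {set option V} :=
  None |: [set Some x | x in ~: S].

Definition quot_edges (S : {set V}) : {set E} := ~: inner_edges S.

Definition quot_ends (S : {set V}) (e : E) : option V * option V :=
  (qmap S (ends G e).1, qmap S (ends G e).2).

Definition quotient_doubly_connected (S : {set V}) : Prop :=
  doubly_connected_on (quot_ends S) (diffusive G) (quot_vertices S) (quot_edges S).
End Mol.

From mathcomp Require Import all_boot.
Set Implicit Arguments. Unset Strict Implicit. Unset Printing Implicit Defensive.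

(* Since every connecting edge set contains a spanning tree (take a minimal
   connecting subset), double connectivity just asks for two disjoint edge
   sets, the first one diffusive, each connecting all molecules.  Collapsing
   S maps paths of G to paths of G/S.  Conversely a path of G/S lifts to G,
   because each of its edges is an edge of G and the only nontrivial fibre, S,
   is connected by the edges of the induced subgraph; these inner edges are
   disjoint from the edges of G/S, so an edge colouring of G/S extended by one
   of the induced subgraph is an edge colouring of G. *)

Section ConnectMap.
Variables (T T' : finType) (f : T -> T') (e : rel T) (e' : rel T').

Lemma connect_homo :
  (forall u w, e u w -> connect e' (f u) (f w)) ->
  forall x y, connect e x y -> connect e' (f x) (f y).
Proof.
move=> homo_e x y /connectP [p]; elim: p x => [|z p IHp] x /=; first by move=> _ ->.
by case/andP=> /homo_e exz /IHp{}IHp /IHp; apply: connect_trans.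
Qed.

Lemma connect_lift :
  (forall u w, f u = f w -> connect e u w) ->
  (forall a b, e' a b -> exists u w, [/\ f u = a, f w = b & e u w]) ->
  forall x y, connect e' (f x) (f y) -> connect e x y.
Proof.
move=> fibre_e lift_e' x y /connectP [p]; elim: p x => [|z p IHp] x /=.
  by move=> _ /esym /fibre_e.
case/andP=> /lift_e' [u [w [fu fw euw]]]; rewrite -fw => /IHp{}IHp /IHp.
apply: connect_trans; apply: connect_trans (fibre_e _ _ (esym fu)) _.
exact: connect1.
Qed.

End ConnectMap.

Lemma disjoint_setU_sides (T : finType) (D A1 A2 B1 B2 : {set T}) :
  A1 \subset D -> A2 \subset D -> B1 \subset ~: D -> B2 \subset ~: D ->
  [disjoint A1 & A2] -> [disjoint B1 & B2] -> [disjoint A1 :|: B1 & A2 :|: B2].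
Proof.
move=> sA1 sA2 sB1 sB2 dA dB.
have dDC : [disjoint D & ~: D] by rewrite disjoints_subset setCK.
have dAB : [disjoint A1 & B2] by apply: disjointW dDC.
have dBA : [disjoint B1 & A2] by rewrite disjoint_sym; apply: disjointW dDC.
by rewrite -setI_eq0 setIUl !setIUr !disjoint_setI0 // !setU0.
Qed.

Section Spans.
Variables (V E : finType) (endp : E -> V * V).

Lemma adj_edge (T : {set E}) e : e \in T -> adj endp T (endp e).1 (endp e).2.
Proof. by move=> eT; apply/existsP; exists e; rewrite eT -surjective_pairing eqxx. Qed.

Lemma adjC (T : {set E}) u v : adj endp T u v = adj endp T v u.
Proof. by apply: eq_existsb => e; rewrite orbC. Qed.

Lemma adj_edgeP (T : {set E}) u v :
  adj endp T u v -> exists2 e, e \in T & endp e = (u, v) \/ endp e = (v, u).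
Proof. by case/existsP=> e /andP [eT /orP [] /eqP ends_e]; exists e; auto. Qed.

Lemma adj_subset (T1 T2 : {set E}) :
  T1 \subset T2 -> subrel (adj endp T1) (adj endp T2).
Proof.
move=> sT12 u v /existsP [e /andP [eT1 ends_e]].
by apply/existsP; exists e; rewrite (subsetP sT12 e eT1).
Qed.

Lemma spans_subset W (T1 T2 : {set E}) :
  T1 \subset T2 -> spans endp W T1 -> spans endp W T2.
Proof.
move=> sT12 spT1 u v uW vW; apply: connect_sub (spT1 u v uW vW) => a b ab.
exact/connect1/(adj_subset sT12).
Qed.

Lemma spanning_tree_exists W (T : {set E}) : W != set0 -> spans endp W T ->
  exists2 T' : {set E}, T' \subset T & spanning_tree endp W T'.
Proof.
pose spansb := [pred T' : {set E} | [forall u, forall v,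
  (u \in W) ==> (v \in W) ==> connect (adj endp T') u v]].
have spansP T' : reflect (spans endp W T') (spansb T').
  apply: (iffP forallP) => [spT' u v uW vW | spT' u].
    by have /forallP/(_ v) := spT' u; rewrite uW vW.
  by apply/forallP => v; apply/implyP => uW; apply/implyP; apply: spT'.
move=> W0 /spansP spT; have [T' /minsetP [/spansP spT' minT'] sT'T] := minset_exists spT.
exists T' => //; split=> //; split=> // e eT' /spansP spT'e.
by have /setP /(_ e) := minT' _ spT'e (subD1set T' e); rewrite !inE eT' eqxx.
Qed.

Lemma doubly_connected_onP diff W F :
  doubly_connected_on endp diff W F <->
  W != set0 /\ exists Bblack Bblue : {set E},
     [/\ Bblack \subset F, Bblue \subset F, [disjoint Bblack & Bblue]
       & (forall e, e \in Bblack -> diff e)] /\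
     spans endp W Bblack /\ spans endp W Bblue.
Proof.
split.
  case=> [Bk [Bb [colB [[Tk sTk [W0 [spTk _]]] [Tb sTb [_ [spTb _]]]]]]].
  by split=> //; exists Bk, Bb; split=> //; split; apply: spans_subset; eauto.
case=> W0 [Bk [Bb [colB [spBk spBb]]]]; exists Bk, Bb.
by split=> //; split; apply: spanning_tree_exists.
Qed.

End Spans.

Section Quotient.
Variables (V E : finType) (G : molgraph V E) (S : {set V}).

Lemma qmap_quot_vertices x : qmap S x \in quot_vertices S.
Proof.
rewrite /qmap /quot_vertices; case: ifPn => xS; rewrite !inE //.
by apply/orP; right; apply/imsetP; exists x; rewrite // inE.
Qed.

Lemma qmap_onto a : S != set0 -> a \in quot_vertices S -> exists x, qmap S x = a.
Proof.
case/set0Pn=> s sS; rewrite /quot_vertices !inE => /orP [/eqP -> | /imsetP [x]].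
  by exists s; rewrite /qmap sS.
by rewrite inE => /negbTE xS ->; exists x; rewrite /qmap xS.
Qed.

Lemma qmap_eq x y : (qmap S x == qmap S y) = (x == y) || (x \in S) && (y \in S).
Proof.
rewrite /qmap; case: ifPn => xS; case: ifPn => yS; rewrite ?andbF ?orbF //.
- by rewrite andbT orbT.
- by apply/esym/eqP => exy; rewrite exy (negbTE yS) in xS.
- by apply/esym/eqP => exy; rewrite exy yS in xS.
Qed.

Lemma qmap_inner_edge e :
  e \in inner_edges G S -> qmap S (ends G e).1 = qmap S (ends G e).2.
Proof. by rewrite inE => /andP [e1S e2S]; rewrite /qmap e1S e2S. Qed.

Lemma spans_quotient B : S != set0 -> spans (ends G) [set: V] B ->
  spans (quot_ends G S) (quot_vertices S) (B :&: quot_edges G S).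
Proof.
move=> S0 spB _ _ /(qmap_onto S0) [x <-] /(qmap_onto S0) [y <-].
have edge_image e : e \in B ->
    connect (adj (quot_ends G S) (B :&: quot_edges G S))
      (qmap S (ends G e).1) (qmap S (ends G e).2).
  move=> eB; have [/qmap_inner_edge -> | eQ] := boolP (e \in inner_edges G S).
    exact: connect0.
  apply/connect1/(adj_edge (quot_ends G S)).
  by rewrite in_setI /quot_edges in_setC eB eQ.
apply: connect_homo (spB x y (in_setT x) (in_setT y)) => u w.
case/adj_edgeP=> e /edge_image + [] ends_e; rewrite ends_e //=.
by rewrite (sym_connect_sym (adjC _ _)).
Qed.

Lemma spans_lift B C : spans (ends G) S C ->
  spans (quot_ends G S) (quot_vertices S) B -> spans (ends G) [set: V] (B :|: C).
Proof.
move=> spC spB x y _ _.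
apply: (connect_lift (f := qmap S)) (spB _ _ (qmap_quot_vertices x) (qmap_quot_vertices y)).
  move=> u w /eqP; rewrite qmap_eq => /orP [/eqP -> | /andP [uS wS]].
    exact: connect0.
  exact: spans_subset (subsetUr B C) spC u w uS wS.
move=> a b /adj_edgeP [e eB ends_e].
have eBC : e \in B :|: C by rewrite inE eB.
case: ends_e => [[<- <-] | [<- <-]].
  by exists (ends G e).1, (ends G e).2; split; rewrite // adj_edge.
by exists (ends G e).2, (ends G e).1; split; rewrite // adjC adj_edge.
Qed.

Lemma quotient_doubly_connected_of :
  S != set0 -> doubly_connected G -> quotient_doubly_connected G S.
Proof.
move=> S0 /doubly_connected_onP [_ [Bk [Bb [[_ _ dB diffBk] [spBk spBb]]]]].
apply/doubly_connected_onP; split; first by apply/set0Pn; exists None; rewrite !inE.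
exists (Bk :&: quot_edges G S), (Bb :&: quot_edges G S).
split; last by split; apply: spans_quotient.
split; rewrite ?subsetIr //; first by apply: disjointW dB; apply: subsetIl.
by move=> e /setIP [/diffBk].
Qed.

Lemma doubly_connected_of_quotient : induced_doubly_connected G S ->
  quotient_doubly_connected G S -> doubly_connected G.
Proof.
move=> /doubly_connected_onP [S0 [Ck [Cb [[sCk sCb dC diffCk] [spCk spCb]]]]].
move=> /doubly_connected_onP [_ [Bk [Bb [[sBk sBb dB diffBk] [spBk spBb]]]]].
apply/doubly_connected_onP; split.
  by case/set0Pn: S0 => s _; apply/set0Pn; exists s; rewrite inE.
exists (Bk :|: Ck), (Bb :|: Cb); split; last by split; apply: spans_lift.
split; rewrite ?subsetT //.
  by rewrite setUC [Bb :|: _]setUC (disjoint_setU_sides sCk sCb sBk sBb dC dB).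
by move=> e /setUP [/diffBk | /diffCk].
Qed.

End Quotient.

Theorem claimA1 (V E : finType) (G : molgraph V E) (S : {set V}) :
  induced_doubly_connected G S ->
  (doubly_connected G <-> quotient_doubly_connected G S).
Proof.
move=> dcS; have [S0 _] := iffLR (doubly_connected_onP _ _ _ _) dcS.
split; [exact: quotient_doubly_connected_of | exact: doubly_connected_of_quotient].
Qed.
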